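(* Let $D_K$ be a relative $K$-entropy satisfying Properties (a), (b) and (c) below, and let $H_K$ be the associated conditional entropy, defined by one of the two forms below. Let $X=\{X_j\}$ be an arbitrary POVM on $\mathcal{H}_A$. Then for every density operator $\rho_{AB}$, $$H_K(X|B)\ge\log\frac{1}{c'(X)}+H_K(A|B),\qquad c'(X):=\max_j\mathrm{Tr}(X_j).$$
   Context: All Hilbert spaces are finite-dimensional; $\log$ has an arbitrary but fixed base. A relative $K$-entropy $D_K$ assigns to every pair $(S,T)$ of positive semidefinite operators on a common Hilbert space an extended real number $D_K(S\|T)$. Properties: (a) for every trace-preserving completely positive map (TPCPM) $\mathcal{E}$ (possibly between different spaces), $D_K(\mathcal{E}(S)\|\mathcal{E}(T))\le D_K(S\|T)$; (b) for positive semidefinite $S,T$ on $\mathcal{H}$ and $T'$ on $\mathcal{H}'$, $D_K(S\oplus 0\,\|\,T\oplus T')=D_K(S\|T)$; (c) for every constant $c>0$, $D_K(S\|cT)=D_K(S\|T)+\log\frac1c$. The conditional $K$-entropy of a density operator $\rho_{AB}$ is either $H_K(A|B)=-D_K(\rho_{AB}\|\mathbb{1}_A\otimes\rho_B)$ for all $\rho_{AB}$, or $H_K(A|B)=\max_{\sigma_B}[-D_K(\rho_{AB}\|\mathbb{1}_A\otimes\sigma_B)]$ for all $\rho_{AB}$, maximum over density operators $\sigma_B$. For a POVM $X=\{X_j\}$ on $\mathcal{H}_A$, let $\mathcal{X}:\rho_A\mapsto\sum_j|j\rangle\langle j|_X\,\mathrm{Tr}(X_j\rho_A)$ with $\{|j\rangle\}$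 orthonormal in a register $\mathcal{H}_X$; $H_K(X|B)$ denotes $H_K$ of the state $(\mathcal{X}\otimes\mathcal{I})(\rho_{AB})$ (register $X$ given $B$). *)

From mathcomp Require Import all_boot all_order all_algebra.
From mathcomp Require Import boolp classical_sets reals ereal exp sequences.
From mathcomp.real_closed Require Import complex mxtens.
Import Order.TTheory GRing.Theory Num.Theory.

Set Implicit Arguments.
Unset Strict Implicit.
Unset Printing Implicit Defensive.

Local Open Scope ring_scope.

Section QuantumDefs.
Variable R : realType.
Local Notation C := (R[i]).

Definition logb (b x : R) : R := ln x / ln b.

Definition adjmx m n (A : 'M[C]_(m, n)) : 'M[C]_(n, m) := (map_mx Num.conj A)^T.

(** Positive semidefinite operator on C^n (Hermitian with nonnegative
    quadratic form; in the numClosedField C, [0 <= z] means z is a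
    nonnegative real). *)
Definition psd n (A : 'M[C]_n) : Prop :=
  A = adjmx A /\ forall v : 'cV[C]_n, 0 <= (adjmx v *m A *m v) 0 0.

Definition density n (A : 'M[C]_n) : Prop := psd A /\ \tr A = 1.

(** Tensor-product convention: H_1 (x) H_2 with dims n1, n2 is C^(n1*n2),
    the basis vector e_i (x) e_j having index [mxtens_index (i, j)]
    (= i * n2 + j), consistent with the Kronecker product [tensmx]. *)

(** Block (a,b) of an operator X on H_n (x) C^k, i.e. the operator on H_n
    with X = sum_{a,b} blk X a b (x) |a><b|. *)
Definition blk n k (X : 'M[C]_(n * k)) (a b : 'I_k) : 'M[C]_n :=
  \matrix_(i, j) X (mxtens_index (i, a)) (mxtens_index (j, b)).

(** (E (x) id_k)(X) for a map E from operators on H_n to operators on H_m. *)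
Definition tens_id {n m} (k : nat) (E : 'M[C]_n -> 'M[C]_m) (X : 'M[C]_(n * k))
  : 'M[C]_(m * k) :=
  \matrix_(p, q)
    E (blk X (mxtens_unindex p).2 (mxtens_unindex q).2)
      (mxtens_unindex p).1 (mxtens_unindex q).1.


Definition tpcp n m (E : 'M[C]_n -> 'M[C]_m) : Prop :=
  [/\ forall (c : C) (X Y : 'M[C]_n), E (c *: X + Y) = c *: E X + E Y,
      forall X : 'M[C]_n, \tr (E X) = \tr X
    & forall (k : nat) (X : 'M[C]_(n * k)), psd X -> psd (@tens_id n m k E X)].

Definition relK_entropy (b : R)
  (D : forall n, 'M[C]_n -> 'M[C]_n -> \bar R) : Prop :=
  [/\
      forall n m (E : 'M[C]_n -> 'M[C]_m), tpcp E ->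
        forall S T : 'M[C]_n, psd S -> psd T ->
          (D m (E S) (E T) <= D n S T)%E,
      forall n m (S T : 'M[C]_n) (T' : 'M[C]_m), psd S -> psd T -> psd T' ->
        D (n + m) (block_mx S 0 0 0) (block_mx T 0 0 T') = D n S T
    &
      forall n (c : R) (S T : 'M[C]_n), 0 < c -> psd S -> psd T ->
        D n S ((real_complex R c) *: T) = (D n S T + (logb b (1 / c))%:E)%E].

Definition ptrA na nb (rho : 'M[C]_(na * nb)) : 'M[C]_nb :=
  \matrix_(j, l) \sum_(i < na) rho (mxtens_index (i, j)) (mxtens_index (i, l)).

(** Conditional K-entropy H_K(A|B) of rho_AB.
    [opt = true]  : H_K(A|B) = - D_K(rho_AB || 1_A (x) rho_B);
    [opt = false] : H_K(A|B) = max over density operators sigma_B of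
                    - D_K(rho_AB || 1_A (x) sigma_B)  (written as a supremum). *)
Definition condH (opt : bool) (D : forall n, 'M[C]_n -> 'M[C]_n -> \bar R)
  na nb (rho : 'M[C]_(na * nb)) : \bar R :=
  if opt then (- D _ rho (tensmx (1%:M : 'M[C]_na) (ptrA rho)))%E
  else ereal_sup ((fun sigma : 'M[C]_nb =>
                     (- D _ rho (tensmx (1%:M : 'M[C]_na) sigma))%E)
                  @` [set sigma | density sigma])%classic.

Definition POVM na k (X : 'I_k -> 'M[C]_na) : Prop :=
  (forall j, psd (X j)) /\ \sum_(j < k) X j = 1%:M.

Definition meas na k (X : 'I_k -> 'M[C]_na) (rhoA : 'M[C]_na) : 'M[C]_k :=
  \matrix_(j, j') ((j == j')%:R * \tr (X j *m rhoA)).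

(** c'(X) = max_j Tr(X_j) (the traces are nonnegative reals). *)
Definition cprime na k (X : 'I_k -> 'M[C]_na) : R :=
  \big[Num.max/0]_(j < k) complex.Re (\tr (X j)).

End QuantumDefs.
Arguments tens_id {R n m} k E X.

From mathcomp Require Import all_boot all_order all_algebra.
From mathcomp Require Import boolp classical_sets reals ereal exp sequences.
From mathcomp.real_closed Require Import complex mxtens.
From mathcomp Require Import sesquilinear spectral.
Import Order.TTheory GRing.Theory Num.Theory.
Local Open Scope ring_scope.

Set Implicit Arguments.
Unset Strict Implicit.
Unset Printing Implicit Defensive.

(* Write M for the measurement channel [meas X] tensored with id_B and c for c'(X).
   On (A (x) B) (+) (K (x) B) the channel F(Y) = M(Y_AA) + Y_KK sends rho (+) 0 to
   M rho and, because M(1 (x) sigma) = diag(Tr X_j) (x) sigma, it sends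
   (1 (x) sigma) (+) (diag(c - Tr X_j) (x) sigma) to c (1 (x) sigma); the padding is
   positive since c >= Tr X_j.  Data processing (a), the direct-sum property (b) and
   scaling (c) then give D(M rho || 1 (x) sigma) + log(1/c) <= D(rho || 1 (x) sigma) for
   every sigma, which yields both forms of the conditional entropy (the first one
   because M leaves rho_B unchanged).  F is completely positive because it has a
   Kraus form, obtained for M by diagonalizing each POVM element. *)

Section PositiveSemidefinite.
Variable R : realType.
Local Notation C := R[i].

Lemma adjmxE m n (A : 'M[C]_(m, n)) i j : adjmx A i j = (A j i)^*.
Proof. by rewrite !mxE. Qed.

Lemma adjmxK m n (A : 'M[C]_(m, n)) : adjmx (adjmx A) = A.
Proof. by apply/matrixP => i j; rewrite !adjmxE conjCK. Qed.

Lemma adjmxM m n p (A : 'M[C]_(m, n)) (B : 'M[C]_(n, p)) :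
  adjmx (A *m B) = adjmx B *m adjmx A.
Proof. by rewrite /adjmx map_mxM trmx_mul. Qed.

Lemma adjmx0 m n : adjmx (0 : 'M[C]_(m, n)) = 0.
Proof. by rewrite /adjmx map_mx0 trmx0. Qed.

Lemma adjmx1 n : adjmx (1%:M : 'M[C]_n) = 1%:M.
Proof. by apply/matrixP => i j; rewrite !mxE rmorph_nat eq_sym. Qed.

Lemma adjmx_delta m n (i : 'I_m) (j : 'I_n) :
  adjmx (delta_mx i j : 'M[C]_(m, n)) = delta_mx j i.
Proof. by apply/matrixP => a b; rewrite !mxE rmorph_nat andbC. Qed.

Lemma adjmx_diag n (d : 'rV[C]_n) : adjmx (diag_mx d) = diag_mx (map_mx Num.conj d).
Proof. by rewrite /adjmx map_diag_mx tr_diag_mx. Qed.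

Lemma adjmx_row m n1 n2 (A : 'M[C]_(m, n1)) (B : 'M[C]_(m, n2)) :
  adjmx (row_mx A B) = col_mx (adjmx A) (adjmx B).
Proof. by rewrite /adjmx map_row_mx tr_row_mx. Qed.

Lemma adjmx_col m1 m2 n (A : 'M[C]_(m1, n)) (B : 'M[C]_(m2, n)) :
  adjmx (col_mx A B) = row_mx (adjmx A) (adjmx B).
Proof. by rewrite /adjmx map_col_mx tr_col_mx. Qed.

Lemma adjmx_block m1 m2 n1 n2 (A : 'M[C]_(m1, n1)) (B : 'M[C]_(m1, n2))
  (D : 'M[C]_(m2, n1)) (E : 'M[C]_(m2, n2)) :
  adjmx (block_mx A B D E) = block_mx (adjmx A) (adjmx D) (adjmx B) (adjmx E).
Proof. by rewrite /adjmx map_block_mx tr_block_mx. Qed.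

Lemma adjmx_tens m n p q (A : 'M[C]_(m, n)) (B : 'M[C]_(p, q)) :
  adjmx (A *t B) = adjmx A *t adjmx B.
Proof. by rewrite /adjmx map_mxT trmx_tens. Qed.

Lemma adjmx_map_trmx m n (A : 'M[C]_(m, n)) : adjmx A = map_mx Num.conj A^T.
Proof. by rewrite /adjmx map_trmx. Qed.

Definition sandwich m n (W : 'M[C]_(m, n)) (A : 'M[C]_n) : 'M[C]_m :=
  W *m A *m adjmx W.

Lemma psd_sandwich m n (W : 'M[C]_(m, n)) A : psd A -> psd (sandwich W A).
Proof.
case=> hA hq; split; first by rewrite /sandwich !adjmxM adjmxK -hA mulmxA.
move=> v; have := hq (adjmx W *m v).
by rewrite adjmxM adjmxK /sandwich !mulmxA.
Qed.

Lemma psd0 n : psd (0 : 'M[C]_n).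
Proof.
split; first by apply/matrixP => i j; rewrite adjmxE !mxE conjC0.
by move=> v; rewrite mulmx0 mul0mx mxE.
Qed.

Lemma psdD n (A B : 'M[C]_n) : psd A -> psd B -> psd (A + B).
Proof.
case=> hA qA [hB qB]; split.
  by apply/matrixP => i j; rewrite adjmxE !mxE rmorphD /= -!adjmxE -hA -hB.
by move=> v; rewrite mulmxDr mulmxDl mxE addr_ge0.
Qed.

Lemma psdZ n (c : C) (A : 'M[C]_n) : 0 <= c -> psd A -> psd (c *: A).
Proof.
move=> c0 [hA qA]; split.
  apply/matrixP => i j; rewrite adjmxE !mxE rmorphM /= -adjmxE -hA.
  by rewrite (conj_Creal (ger0_real c0)).
by move=> v; rewrite -scalemxAr -scalemxAl mxE mulr_ge0.
Qed.

Lemma psd_sum (I : finType) n (A : I -> 'M[C]_n) :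
  (forall i, psd (A i)) -> psd (\sum_i A i).
Proof. by move=> hA; elim/big_ind: _ => //; [exact: psd0 | exact: psdD]. Qed.

Lemma psd_ge0 n (A : 'M[C]_n) i : psd A -> 0 <= A i i.
Proof.
case=> _ /(_ (delta_mx i 0)); rewrite adjmx_delta -rowE -colE.
by rewrite !mxE.
Qed.

Lemma psd_mxtrace_ge0 n (A : 'M[C]_n) : psd A -> 0 <= \tr A.
Proof. by move=> hA; apply: sumr_ge0 => i _; apply: psd_ge0. Qed.

Lemma psd_diag_mx n (d : 'rV[C]_n) : (forall i, 0 <= d 0 i) -> psd (diag_mx d).
Proof.
move=> d0; split.
  rewrite adjmx_diag; congr diag_mx; apply/rowP => i.
  by rewrite mxE (conj_Creal (ger0_real (d0 i))).
move=> v; rewrite mul_mx_diag mxE; apply: sumr_ge0 => i _.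
by rewrite !mxE -mulrA mulrC -mulrA mulr_ge0 // mul_conjC_ge0.
Qed.

Lemma psd_block_diag m n (A : 'M[C]_m) (B : 'M[C]_n) :
  psd A -> psd B -> psd (block_mx A 0 0 B).
Proof.
case=> hA qA [hB qB]; split.
  by rewrite adjmx_block !adjmx0 -hA -hB.
move=> v; rewrite -[v]vsubmxK.
rewrite adjmx_col mul_row_block !mulmx0 addr0 add0r mul_row_col mxE.
exact: addr_ge0.
Qed.

(** * Spectral decomposition *)

Lemma psd_hermsymmx n (A : 'M[C]_n) : psd A -> A \is hermsymmx.
Proof. by case=> hA _; apply/is_hermitianmxP; rewrite expr0 scale1r -adjmx_map_trmx. Qed.

Lemma spectral_adjmxK n (A : 'M[C]_n) : spectralmx A *m adjmx (spectralmx A) = 1%:M.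
Proof. by have /unitarymxP := spectral_unitarymx A; rewrite -adjmx_map_trmx. Qed.

Lemma psd_spectralE n (A : 'M[C]_n) : psd A ->
  A = adjmx (spectralmx A) *m diag_mx (spectral_diag A) *m spectralmx A.
Proof.
move/psd_hermsymmx/hermitian_normalmx/orthomx_spectralP.
by rewrite invmx_unitary ?spectral_unitarymx // -adjmx_map_trmx.
Qed.

Lemma psd_spectral_diag_ge0 n (A : 'M[C]_n) i : psd A -> 0 <= spectral_diag A 0 i.
Proof.
move=> hA; have DE : sandwich (spectralmx A) A = diag_mx (spectral_diag A).
  by rewrite /sandwich {2}(psd_spectralE hA) !mulmxA spectral_adjmxK mul1mx
    -mulmxA spectral_adjmxK mulmx1.
by have := psd_ge0 i (psd_sandwich (spectralmx A) hA); rewrite DE mxE eqxx mulr1n.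
Qed.

Lemma tensmx_diag m n (d : 'rV[C]_m) (e : 'rV[C]_n) :
  diag_mx d *t diag_mx e =
  diag_mx (\row_p (d 0 (mxtens_unindex p).1 * e 0 (mxtens_unindex p).2)).
Proof.
apply/matrixP => p q; case: (mxtens_indexP p) => i a; case: (mxtens_indexP q) => j b.
rewrite tensmxE !mxE !mxtens_indexK (inj_eq (can_inj (@mxtens_indexK _ _))) /=.
by rewrite xpair_eqE; case: (i == j); case: (a == b); rewrite ?mulr0n ?mulr1n ?mulr0 ?mul0r.
Qed.

Lemma psd_tensmx m n (A : 'M[C]_m) (B : 'M[C]_n) : psd A -> psd B -> psd (A *t B).
Proof.
move=> hA hB; rewrite (psd_spectralE hA) (psd_spectralE hB) -!tensmx_mul -adjmx_tens.
set P := spectralmx A *t spectralmx B.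
have := psd_sandwich (adjmx P)
  (A := diag_mx (spectral_diag A) *t diag_mx (spectral_diag B)).
rewrite /sandwich adjmxK; apply; rewrite tensmx_diag.
by apply: psd_diag_mx => p; rewrite mxE mulr_ge0 // psd_spectral_diag_ge0.
Qed.

Lemma sandwich_row n (P : 'M[C]_n) A i : sandwich P A i i = sandwich (row i P) A 0 0.
Proof.
rewrite !mxE; apply: eq_bigr => t _; rewrite !mxE; congr (_ * _).
by apply: eq_bigr => s _; rewrite mxE.
Qed.

Lemma mxtrace_spectral n (P : 'M[C]_n) (d : 'rV[C]_n) A :
  \tr (adjmx P *m diag_mx d *m P *m A) = \sum_i d 0 i * sandwich (row i P) A 0 0.
Proof.
rewrite -!mulmxA mxtrace_mulC !mulmxA -(mulmxA (diag_mx d)) -mulmxA mul_diag_mx.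
by rewrite /mxtrace; apply: eq_bigr => i _; rewrite mxE sandwich_row.
Qed.

Lemma sandwich_delta_mul k n (j : 'I_k) (r : 'rV[C]_n) A a a' :
  sandwich (delta_mx j 0 *m r) A a a' =
  ((a == j) && (a' == j))%:R * sandwich r A 0 0.
Proof.
rewrite /sandwich adjmxM adjmx_delta !mulmxA -(mulmxA _ r) -(mulmxA _ (r *m A)).
rewrite [r *m A *m adjmx r]mx11_scalar mul_mx_scalar -scalemxAl mul_delta_mx.
by rewrite mxE mulrC [delta_mx _ _ _ _]mxE [_%:M 0 0]mxE mulr1n.
Qed.

End PositiveSemidefinite.

(** * Maps tensored with the identity *)

Section TensorIdentity.
Variable R : realType.
Local Notation C := R[i].

Lemma sum_delta (I : finType) (a : I) (F : I -> C) : \sum_c (a == c)%:R * F c = F a.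
Proof.
rewrite (bigD1 a) //= eqxx mul1r big1 ?addr0 // => c /negbTE.
by rewrite eq_sym => ->; rewrite mul0r.
Qed.

Lemma sum_tens (V : nmodType) m n (F : 'I_(m * n) -> V) :
  \sum_p F p = \sum_i \sum_j F (mxtens_index (i, j)).
Proof.
rewrite pair_big /= (reindex (@mxtens_index m n)) /=; first by apply: eq_bigr => -[].
by exists (@mxtens_unindex m n) => p _; rewrite (mxtens_indexK, mxtens_unindexK).
Qed.

Lemma blk_inj n k (Y Z : 'M[C]_(n * k)) : (forall a b, blk Y a b = blk Z a b) -> Y = Z.
Proof.
move=> hYZ; apply/matrixP => p q.
case: (mxtens_indexP p) => i a; case: (mxtens_indexP q) => j b.
by have /matrixP/(_ i j) := hYZ a b; rewrite !mxE.
Qed.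

Lemma blk_tens_id n m k (E : 'M[C]_n -> 'M[C]_m) (Y : 'M[C]_(n * k)) a b :
  blk (tens_id k E Y) a b = E (blk Y a b).
Proof. by apply/matrixP => i j; rewrite !mxE !mxtens_indexK. Qed.

Lemma blk_tensmx n k (A : 'M[C]_n) (B : 'M[C]_k) a b : blk (A *t B) a b = B a b *: A.
Proof. by apply/matrixP => i j; rewrite mxE tensmxE [RHS]mxE mulrC. Qed.

Lemma mul_tens1_mx m n k l (W : 'M[C]_(m, n)) (Y : 'M[C]_(n * k, l)) i a q :
  ((W *t 1%:M) *m Y) (mxtens_index (i, a)) q =
  \sum_s W i s * Y (mxtens_index (s, a)) q.
Proof.
rewrite mxE sum_tens; apply: eq_bigr => s _.
by under eq_bigr do rewrite tensmxE mxE -mulrA mulrCA; rewrite sum_delta.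
Qed.

Lemma mul_mx_tens1 m n k l (Z : 'M[C]_(l, n * k)) (V : 'M[C]_(n, m)) p j b :
  (Z *m (V *t 1%:M)) p (mxtens_index (j, b)) =
  \sum_t Z p (mxtens_index (t, b)) * V t j.
Proof.
rewrite mxE sum_tens; apply: eq_bigr => t _.
under eq_bigr do rewrite tensmxE mxE mulrA mulrC eq_sym.
by rewrite sum_delta.
Qed.

Lemma blk_sandwich_tens1 m n k (W : 'M[C]_(m, n)) (Y : 'M[C]_(n * k)) a b :
  blk (sandwich (W *t 1%:M) Y) a b = sandwich W (blk Y a b).
Proof.
apply/matrixP => i j; rewrite /sandwich adjmx_tens adjmx1 mxE mul_mx_tens1 mxE.
apply: eq_bigr => t _; rewrite mul_tens1_mx mxE; congr (_ * _).
by rewrite mxE; apply: eq_bigr => s _; rewrite mxE.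
Qed.

Lemma tens_id_ext n m l (E1 E2 : 'M[C]_n -> 'M[C]_m) (Y : 'M[C]_(n * l)) :
  E1 =1 E2 -> tens_id l E1 Y = tens_id l E2 Y.
Proof. by move=> hE; apply/matrixP => p q; rewrite !mxE hE. Qed.

Lemma tens_idD n m k (E1 E2 : 'M[C]_n -> 'M[C]_m) (Y : 'M[C]_(n * k)) :
  tens_id k (fun A => E1 A + E2 A) Y = tens_id k E1 Y + tens_id k E2 Y.
Proof. by apply/matrixP => p q; rewrite !mxE. Qed.

Lemma tens_id_sandwich m n k (W : 'M[C]_(m, n)) (Y : 'M[C]_(n * k)) :
  tens_id k (sandwich W) Y = sandwich (W *t 1%:M) Y.
Proof. by apply: blk_inj => a b; rewrite blk_tens_id blk_sandwich_tens1. Qed.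

Lemma tens_id_tensmx n m k (E : 'M[C]_n -> 'M[C]_m) (A : 'M[C]_n) (B : 'M[C]_k) :
  (forall c A, E (c *: A) = c *: E A) -> tens_id k E (A *t B) = E A *t B.
Proof. by move=> EZ; apply: blk_inj => a b; rewrite blk_tens_id !blk_tensmx EZ. Qed.

Definition kraus (I : finType) m n (w : I -> C) (K : I -> 'M[C]_(m, n))
  (A : 'M[C]_n) : 'M[C]_m := \sum_i w i *: sandwich (K i) A.

Lemma psd_kraus (I : finType) m n (w : I -> C) (K : I -> 'M[C]_(m, n)) A :
  (forall i, 0 <= w i) -> psd A -> psd (kraus w K A).
Proof. by move=> w0 hA; apply: psd_sum => i; apply/psdZ/psd_sandwich. Qed.

Lemma kraus_is_linear (I : finType) m n (w : I -> C) (K : I -> 'M[C]_(m, n)) c A B :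
  kraus w K (c *: A + B) = c *: kraus w K A + kraus w K B.
Proof.
rewrite /kraus scaler_sumr -big_split; apply: eq_bigr => i _.
by rewrite /sandwich mulmxDr mulmxDl -scalemxAr -scalemxAl scalerDr !scalerA mulrC.
Qed.

Lemma tens_id_kraus (I : finType) m n k (w : I -> C) (K : I -> 'M[C]_(m, n))
  (Y : 'M[C]_(n * k)) :
  tens_id k (kraus w K) Y = kraus w (fun i => K i *t 1%:M) Y.
Proof.
apply: blk_inj => a b; rewrite blk_tens_id; apply/matrixP => i j.
rewrite [RHS]mxE !summxE; apply: eq_bigr => l _.
by rewrite -blk_sandwich_tens1 [LHS]mxE [RHS]mxE [blk _ _ _ _ _]mxE.
Qed.

Lemma sandwich_row_mx0 m n1 n2 (W : 'M[C]_(m, n1)) (Y : 'M[C]_(n1 + n2)) :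
  sandwich (row_mx W 0) Y = sandwich W (ulsubmx Y).
Proof.
rewrite /sandwich -[Y]submxK adjmx_row mul_row_block !mul0mx !addr0 mul_row_col.
by rewrite adjmx0 mulmx0 addr0 block_mxKul.
Qed.

Lemma sandwich_row0_mx m n1 n2 (W : 'M[C]_(m, n2)) (Y : 'M[C]_(n1 + n2)) :
  sandwich (row_mx 0 W) Y = sandwich W (drsubmx Y).
Proof.
rewrite /sandwich -[Y]submxK adjmx_row mul_row_block !mul0mx !add0r mul_row_col.
by rewrite adjmx0 mulmx0 add0r block_mxKdr.
Qed.

Lemma ptrA_blk na nb (Y : 'M[C]_(na * nb)) : ptrA Y = \matrix_(a, b) \tr (blk Y a b).
Proof. by apply/matrixP => a b; rewrite !mxE; apply: eq_bigr => i _; rewrite mxE. Qed.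

Lemma ptrA_tens_id n m k (E : 'M[C]_n -> 'M[C]_m) (Y : 'M[C]_(n * k)) :
  (forall A, \tr (E A) = \tr A) -> ptrA (tens_id k E Y) = ptrA Y.
Proof.
by move=> trE; rewrite !ptrA_blk; apply/matrixP => a b; rewrite !mxE blk_tens_id trE.
Qed.

Lemma mxtrace_ptrA na nb (Y : 'M[C]_(na * nb)) : \tr (ptrA Y) = \tr Y.
Proof.
rewrite /mxtrace sum_tens exchange_big; apply: eq_bigr => b _.
by rewrite mxE.
Qed.

Lemma ptrA_kraus na nb (Y : 'M[C]_(na * nb)) :
  ptrA Y = kraus (fun=> 1) (fun i => \matrix_(b, p) (mxtens_index (i, b) == p)%:R) Y.
Proof.
apply/matrixP => b b'; rewrite !mxE summxE; apply: eq_bigr => i _.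
rewrite scale1r mxE.
under eq_bigr do rewrite adjmxE !mxE rmorph_nat mulrC.
by rewrite sum_delta; under eq_bigr do rewrite mxE; rewrite sum_delta.
Qed.

Lemma psd_ptrA na nb (Y : 'M[C]_(na * nb)) : psd Y -> psd (ptrA Y).
Proof. by move=> hY; rewrite ptrA_kraus; apply: psd_kraus => // _; exact: ler01. Qed.

End TensorIdentity.

(** * The measurement channel *)

Section Measurement.
Variable R : realType.
Local Notation C := R[i].
Variables (na k : nat) (X : 'I_k -> 'M[C]_na).

Lemma measZ c A : meas X (c *: A) = c *: meas X A.
Proof. by apply/matrixP => a b; rewrite !mxE -scalemxAr mxtraceZ mulrCA. Qed.

Lemma meas1 : meas X 1%:M = diag_mx (\row_j \tr (X j)).
Proof. by apply/matrixP => a b; rewrite !mxE mulmx1 mulr_natl. Qed.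

Lemma mxtrace_meas : POVM X -> forall A, \tr (meas X A) = \tr A.
Proof.
case=> _ sumX A; rewrite -[in RHS](mul1mx A) -sumX mulmx_suml raddf_sum {1}/mxtrace.
by apply: eq_bigr => j _; rewrite mxE eqxx mul1r.
Qed.

(* If X_j = P^* diag(d) P with rows P_i, then Tr(X_j A) |j><j| is
   sum_i d_i (e_j P_i) A (e_j P_i)^*: Kraus weights and operators of [meas X]. *)
Definition meas_weight (ji : 'I_k * 'I_na) : C := spectral_diag (X ji.1) 0 ji.2.

Definition meas_op (ji : 'I_k * 'I_na) : 'M[C]_(k, na) :=
  delta_mx ji.1 0 *m row ji.2 (spectralmx (X ji.1)).

Lemma meas_weight_ge0 : (forall j, psd (X j)) -> forall ji, 0 <= meas_weight ji.
Proof. by move=> hX ji; apply: psd_spectral_diag_ge0. Qed.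

Lemma meas_kraus : (forall j, psd (X j)) -> meas X =1 kraus meas_weight meas_op.
Proof.
move=> hX A; apply/matrixP => a a'.
rewrite mxE {1}(psd_spectralE (hX a)) mxtrace_spectral summxE /meas_weight /meas_op /=.
under [RHS]eq_bigr => p _ do rewrite mxE sandwich_delta_mul.
rewrite -[RHS](pair_bigA _ (fun j i => spectral_diag (X j) 0 i *
  (((a == j) && (a' == j))%:R * sandwich (row i (spectralmx (X j))) A 0 0))) /=.
rewrite [RHS](bigD1 a) //= [X in _ + X]big1 ?addr0 => [|j nja]; last first.
  by rewrite big1 // => i _; rewrite eq_sym (negbTE nja) mul0r mulr0.
by rewrite eqxx mulr_sumr; apply: eq_bigr => i _; rewrite eq_sym mulrCA.
Qed.

End Measurement.

Section MeasurementChannel.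
Variable R : realType.
Local Notation C := R[i].
Variables (na nb k : nat) (X : 'I_k -> 'M[C]_na).
Hypothesis hX : POVM X.

Local Notation M := (tens_id nb (meas X)).

Lemma meas_tens_kraus Z : M Z = kraus (meas_weight X) (fun i => meas_op X i *t 1%:M) Z.
Proof. by rewrite (tens_id_ext _ (meas_kraus hX.1)) tens_id_kraus. Qed.

Lemma psd_meas_tens Z : psd Z -> psd (M Z).
Proof. by rewrite meas_tens_kraus; apply/psd_kraus/meas_weight_ge0/hX.1. Qed.

Lemma ptrA_meas_tens Z : ptrA (M Z) = ptrA Z.
Proof. exact/ptrA_tens_id/mxtrace_meas. Qed.

Lemma mxtrace_meas_tens Z : \tr (M Z) = \tr Z.
Proof. by rewrite -mxtrace_ptrA ptrA_meas_tens mxtrace_ptrA. Qed.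

Lemma meas_tens1mx (sigma : 'M[C]_nb) :
  M (1%:M *t sigma) = diag_mx (\row_j \tr (X j)) *t sigma.
Proof. by rewrite tens_id_tensmx ?meas1 //; exact: measZ. Qed.

Definition meas_channel (Y : 'M[C]_(na * nb + k * nb)) : 'M[C]_(k * nb) :=
  M (ulsubmx Y) + drsubmx Y.

Lemma meas_channel_block Z W : meas_channel (block_mx Z 0 0 W) = M Z + W.
Proof. by rewrite /meas_channel block_mxKul block_mxKdr. Qed.

Lemma tpcp_meas_channel : tpcp meas_channel.
Proof.
split.
- move=> c Y1 Y2; rewrite /meas_channel.
  have -> : ulsubmx (c *: Y1 + Y2) = c *: ulsubmx Y1 + ulsubmx Y2.
    by apply/matrixP => i j; rewrite !mxE.
  have -> : drsubmx (c *: Y1 + Y2) = c *: drsubmx Y1 + drsubmx Y2.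
    by apply/matrixP => i j; rewrite !mxE.
  by rewrite !meas_tens_kraus kraus_is_linear scalerDr addrACA.
- by move=> Y; rewrite mxtraceD mxtrace_meas_tens -[in RHS](submxK Y) mxtrace_block.
- move=> l Y hY.
  have chanE : meas_channel =1 fun Y =>
      kraus (meas_weight X) (fun i => row_mx (meas_op X i *t 1%:M) 0) Y +
      sandwich (row_mx 0 1%:M) Y.
    move=> Y'; rewrite /meas_channel meas_tens_kraus sandwich_row0_mx.
    rewrite /sandwich mul1mx adjmx1 mulmx1.
    by congr (_ + _); apply: eq_bigr => i _; rewrite sandwich_row_mx0.
  rewrite (tens_id_ext _ chanE) tens_idD tens_id_kraus tens_id_sandwich.
  apply: psdD; last exact: psd_sandwich.
  by apply: psd_kraus hY; exact: meas_weight_ge0 hX.1.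
Qed.

Lemma mxtrace_povm_real j : \tr (X j) = (complex.Re (\tr (X j)))%:C%C.
Proof. exact/esym/RRe_real/ger0_real/psd_mxtrace_ge0/hX.1. Qed.

Lemma cprime_gt0 : (0 < na)%N -> 0 < cprime X.
Proof.
move=> na_gt0; rewrite ltNge; apply/negP => c_le0.
have : \sum_j \tr (X j) = na%:R by rewrite -raddf_sum /= hX.2 mxtrace_scalar.
have : \sum_j \tr (X j) <= 0.
  apply: sumr_le0 => j _; rewrite mxtrace_povm_real -(rmorph0 (real_complex R)) lecR.
  exact: le_trans (le_bigmax _ _ _) c_le0.
by move=> /[swap] ->; rewrite lern0 => /eqP na0; rewrite na0 in na_gt0.
Qed.

Lemma relK_meas_tens1mx_le (b : R) (D : forall n, 'M[C]_n -> 'M[C]_n -> \bar R)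
  (rho : 'M[C]_(na * nb)) (sigma : 'M[C]_nb) :
  relK_entropy b D -> psd rho -> psd sigma -> 0 < cprime X ->
  (D _ (M rho) (1%:M *t sigma) + (logb b (1 / cprime X))%:E
     <= D _ rho (1%:M *t sigma))%E.
Proof.
move=> [DPI Dsum Dscale] hrho hsigma c_gt0.
set T' := diag_mx (\row_j ((cprime X)%:C%C - \tr (X j))) *t sigma.
have psd1 m : psd (1%:M *t sigma : 'M[C]_(m * nb)).
  apply: psd_tensmx hsigma; rewrite -diag_const_mx.
  by apply: psd_diag_mx => i; rewrite mxE ler01.
have psdT' : psd T'.
  apply: psd_tensmx hsigma; apply: psd_diag_mx => j.
  by rewrite mxE mxtrace_povm_real -rmorphB lecR subr_ge0 le_bigmax.
have chanT : meas_channel (block_mx (1%:M *t sigma) 0 0 T') =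
    real_complex R (cprime X) *: (1%:M *t sigma).
  rewrite meas_channel_block meas_tens1mx; apply/matrixP => p q.
  case: (mxtens_indexP p) => i a; case: (mxtens_indexP q) => j a'.
  by rewrite !mxE !mxtens_indexK /= -mulrDl -mulrnDl addrC subrK mulrA mulr_natr.
rewrite -(Dscale _ _ _ _ c_gt0); [|exact: psd_meas_tens|exact: psd1].
have := DPI _ _ _ tpcp_meas_channel _ _
  (psd_block_diag hrho (psd0 _ _)) (psd_block_diag (psd1 _) psdT').
by rewrite chanT meas_channel_block addr0 Dsum // ?psd0.
Qed.

End MeasurementChannel.

Theorem lemma3 (R : realType) (b : R) (hb : 1 < b)
  (D : forall n, 'M[R[i]]_n -> 'M[R[i]]_n -> \bar R)
  (hD : relK_entropy b D) (opt : bool)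
  (na nb k : nat) (X : 'I_k -> 'M[R[i]]_na) (hX : POVM X)
  (rho : 'M[R[i]]_(na * nb)) (hrho : density rho) :
  ((logb b (1 / cprime X))%:E + condH opt D rho
     <= condH opt D (tens_id nb (meas X) rho))%E.
Proof.
have [psd_rho tr_rho] := hrho.
have c_gt0 : 0 < cprime X.
  apply: cprime_gt0 => //; rewrite lt0n; apply/eqP => na0; move: rho tr_rho {hrho psd_rho}.
  by rewrite na0 => rho; rewrite /mxtrace big_ord0 => /esym/eqP; rewrite oner_eq0.
have flip (A B : \bar R) (l : R) : (A + l%:E <= B -> l%:E - B <= - A)%E.
  by move=> h; rewrite addeC -leeBrDr // -fin_num_oppeD // leeN2.
case: opt; rewrite /condH /=.
  rewrite (ptrA_meas_tens hX); apply: flip.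
  by apply: (relK_meas_tens1mx_le hX) => //; exact: psd_ptrA.
rewrite addeC -leeBrDr //; apply: ge_ereal_sup => _ [sigma dsigma <-].
rewrite leeBrDr // addeC; apply: le_trans; last by apply: ereal_sup_ubound; exists sigma.
by apply: flip; apply: (relK_meas_tens1mx_le hX) => //; case: dsigma.
Qed.
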